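(* Let $(X,d^\star)$ be a $\star$-metric space such that every infinite subset of $X$ has an $\omega$-accumulation point in the topological space $(X,\mathscr{T}_{d^\star})$. Then $(X,d^\star)$ is totally bounded.
   Context: A $t$-definer is a function $\star:[0,\infty)\times[0,\infty)\to[0,\infty)$ such that for all $a,b,c\ge 0$: $a\star b=b\star a$; $a\star(b\star c)=(a\star b)\star c$; if $a\le b$ then $a\star c\le b\star c$; $a\star 0=a$; and $\star$ is continuous in its first variable with respect to the Euclidean topology. Given a nonempty set $X$ and a $t$-definer $\star$, a $\star$-metric on $X$ is a function $d^\star:X\times X\to[0,\infty)$ such that for all $x,y,z\in X$: $d^\star(x,y)=0$ iff $x=y$; $d^\star(x,y)=d^\star(y,x)$; and $d^\star(x,y)\le d^\star(x,z)\star d^\star(z,y)$; $(X,d^\star)$ is a $\star$-metric space. Put $B_{d^\star}(a,r)=\{x\in X: d^\star(a,x)<r\}$ and let $\mathscr{T}_{d^\star}$ be the topology consisting of all $U\subseteq X$ such that for each $a\in U$ some $B_{d^\star}(a,r)$, $r>0$, is contained in $U$. A point $x$ is an $\omega$-accumulation point of a set $A$ if every neighborhood of $x$ contains infinitely many points of $A$. $(X,d^\star)$ is totally bounded if for every $\epsilon>0$ there is a finite set $F\subseteq X$ with $X=\bigcup_{x\in F}B_{d^\star}(x,\epsilon)$. *)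

From Stdlib Require Import Reals List.
Open Scope R_scope.

(* A t-definer: an operation on [0,oo), given as a function on R whose
   properties are required (and closure holds) on nonnegative arguments. *)
Definition t_definer (star : R -> R -> R) : Prop :=
  (forall a b, 0 <= a -> 0 <= b -> 0 <= star a b) /\
  (forall a b, 0 <= a -> 0 <= b -> star a b = star b a) /\
  (forall a b c, 0 <= a -> 0 <= b -> 0 <= c ->
      star a (star b c) = star (star a b) c) /\
  (forall a b c, 0 <= a -> 0 <= b -> 0 <= c -> a <= b -> star a c <= star b c) /\
  (forall a, 0 <= a -> star a 0 = a) /\
  (forall c a, 0 <= c -> 0 <= a ->
     forall eps, eps > 0 -> exists delta, delta > 0 /\
       forall a', 0 <= a' -> Rabs (a' - a) < delta ->
         Rabs (star a' c - star a c) < eps).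

Definition star_metric {X : Type} (star : R -> R -> R) (d : X -> X -> R) : Prop :=
  (forall x y, 0 <= d x y) /\
  (forall x y, d x y = 0 <-> x = y) /\
  (forall x y, d x y = d y x) /\
  (forall x y z, d x y <= star (d x z) (d z y)).

Definition sball {X : Type} (d : X -> X -> R) (a : X) (r : R) : X -> Prop :=
  fun x => d a x < r.

Definition sopen {X : Type} (d : X -> X -> R) (U : X -> Prop) : Prop :=
  forall a, U a -> exists r, r > 0 /\ forall x, sball d a r x -> U x.

Definition sneighborhood {X : Type} (d : X -> X -> R) (x : X) (N : X -> Prop) : Prop :=
  exists U, sopen d U /\ U x /\ forall y, U y -> N y.

Definition finite_set {X : Type} (A : X -> Prop) : Prop :=
  exists l : list X, forall x, A x -> In x l.

Definition omega_acc_point {X : Type} (d : X -> X -> R) (A : X -> Prop) (x : X) : Prop :=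
  forall N, sneighborhood d x N -> ~ finite_set (fun y => N y /\ A y).

Definition totally_bounded {X : Type} (d : X -> X -> R) : Prop :=
  forall eps, eps > 0 -> exists F : list X,
    forall y, exists x, In x F /\ sball d x eps y.

(* Suppose the space is not totally bounded at scale eps.  Choosing greedily a
   point at distance at least eps from all points chosen so far yields an
   infinite eps-separated set.  By continuity of the t-definer at 0 there is
   t > 0 with a * b < eps for a, b < t; the ball of radius t about an
   omega-accumulation point of that set is a neighbourhood containing two
   distinct points y1, y2 of the set, and d(y1, y2) <= d(y1, x) * d(x, y2) < eps
   contradicts separation. *)
From Stdlib Require Import Reals List.
From Stdlib Require Import Classical ClassicalEpsilon Lra Lia.
Open Scope R_scope.

Lemma t_definer_small (star : R -> R -> R) : t_definer star ->
  forall s, s > 0 -> exists t, t > 0 /\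
    forall a b, 0 <= a -> 0 <= b -> a < t -> b < t -> star a b < s.
Proof.
  intros [_ [Hcomm [_ [Hmono [Hzero Hcont]]]]] s Hs.
  destruct (Hcont (s / 2) 0 ltac:(lra) ltac:(lra) (s / 2) ltac:(lra))
    as [delta [Hdelta Hclose]].
  exists (Rmin delta (s / 2)); split; [apply Rmin_pos; lra|].
  intros a b Ha Hb Hat Hbt.
  assert (Ha_delta : a < delta) by (eapply Rlt_le_trans; [exact Hat | apply Rmin_l]).
  assert (Hb_half : b < s / 2) by (eapply Rlt_le_trans; [exact Hbt | apply Rmin_r]).
  assert (Hb_mono : star a b <= star a (s / 2)).
  { rewrite (Hcomm a b), (Hcomm a (s / 2)) by lra. apply Hmono; lra. }
  assert (Hhalf : star 0 (s / 2) = s / 2) by (rewrite Hcomm by lra; apply Hzero; lra).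
  specialize (Hclose a Ha ltac:(rewrite Rminus_0_r, Rabs_right; lra)).
  rewrite Hhalf in Hclose. apply Rabs_def2 in Hclose. lra.
Qed.

Lemma not_finite_two_points {X : Type} (B : X -> Prop) :
  ~ finite_set B -> exists y1 y2, B y1 /\ B y2 /\ y1 <> y2.
Proof.
  intros Hinf.
  destruct (classic (exists y1, B y1)) as [[y1 Hy1] | Hempty].
  - destruct (classic (exists y2, B y2 /\ y2 <> y1)) as [[y2 [Hy2 Hne]] | Hsingle].
    + exists y1, y2; auto.
    + exfalso. apply Hinf. exists (y1 :: nil). intros z Hz. left.
      apply NNPP. intro Hne. apply Hsingle. exists z; auto.
  - exfalso. apply Hinf. exists nil. intros z Hz. apply Hempty. exists z; auto.
Qed.

Section Greedy.

Context {X : Type} (P : X -> X -> Prop) (g : list X -> X).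
Hypothesis P_irrefl : forall x, ~ P x x.
Hypothesis P_sym : forall x y, P x y -> P y x.
Hypothesis g_P : forall F x, In x F -> P x (g F).

Fixpoint greedy (n : nat) : list X :=
  match n with O => nil | S k => g (greedy k) :: greedy k end.

Lemma greedy_length n : length (greedy n) = n.
Proof. induction n; simpl; auto. Qed.

Lemma greedy_incl n k : incl (greedy n) (greedy (n + k)).
Proof.
  induction k.
  - rewrite Nat.add_0_r. apply incl_refl.
  - rewrite Nat.add_succ_r. intros a Ha. right. auto.
Qed.

Lemma greedy_NoDup n : NoDup (greedy n).
Proof.
  induction n; simpl; constructor; auto.
  intros Hin. exact (P_irrefl _ (g_P _ _ Hin)).
Qed.

Lemma greedy_pairwise n a b :
  In a (greedy n) -> In b (greedy n) -> a <> b -> P a b.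
Proof.
  induction n; simpl; [tauto|].
  intros [<- | Ha] [<- | Hb] Hab.
  - congruence.
  - apply P_sym, g_P; auto.
  - apply g_P; auto.
  - auto.
Qed.

Lemma greedy_union_infinite : ~ finite_set (fun z => exists n, In z (greedy n)).
Proof.
  intros [l Hl].
  assert (Hlen := NoDup_incl_length (greedy_NoDup (S (length l))) (l' := l)).
  rewrite greedy_length in Hlen.
  enough (S (length l) <= length l)%nat by lia.
  apply Hlen. intros a Ha. apply Hl. eauto.
Qed.

End Greedy.

Lemma exists_infinite_pairwise {X : Type} (P : X -> X -> Prop) :
  (forall x, ~ P x x) -> (forall x y, P x y -> P y x) ->
  (forall F : list X, exists y, forall x, In x F -> P x y) ->
  exists A : X -> Prop, ~ finite_set A /\
    forall a b, A a -> A b -> a <> b -> P a b.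
Proof.
  intros P_irrefl P_sym Hfar.
  set (g := fun F => proj1_sig (constructive_indefinite_description _ (Hfar F))).
  assert (g_P : forall F x, In x F -> P x (g F))
    by (intros F; exact (proj2_sig (constructive_indefinite_description _ (Hfar F)))).
  exists (fun z => exists n, In z (greedy g n)). split.
  - exact (greedy_union_infinite P g P_irrefl g_P).
  - intros a b [n Ha] [m Hb] Hab.
    apply (greedy_pairwise P g P_sym g_P (n + m)); auto.
    + apply greedy_incl; exact Ha.
    + rewrite Nat.add_comm. apply greedy_incl; exact Hb.
Qed.

Section StarMetric.

Context {X : Type} {star : R -> R -> R} {d : X -> X -> R}.
Hypothesis Hstar : t_definer star.
Hypothesis Hd : star_metric star d.

Lemma star_metric_refl x : d x x = 0.
Proof. apply Hd. reflexivity. Qed.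

Lemma sneighborhood_sball x r : r > 0 -> sneighborhood d x (sball d x r).
Proof.
  intros Hr.
  destruct Hd as [Dnn [_ [_ Dtri]]].
  exists (fun y => exists s, s > 0 /\ forall w, d y w < s -> d x w < r).
  split; [|split].
  - intros a [s [Hs Hball]].
    destruct (t_definer_small star Hstar s Hs) as [t [Ht Hsmall]].
    exists t. split; auto.
    intros z Hz. exists t. split; auto.
    intros w Hw. apply Hball.
    eapply Rle_lt_trans; [apply (Dtri a w z) | apply Hsmall; auto].
  - exists r. split; auto.
  - intros y [s [Hs Hball]]. apply Hball. rewrite star_metric_refl. lra.
Qed.

Lemma separated_no_omega_acc_point (eps : R) (A : X -> Prop) x :
  eps > 0 -> (forall a b, A a -> A b -> a <> b -> eps <= d a b) ->
  ~ omega_acc_point d A x.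
Proof.
  intros Heps Hsep Hacc.
  destruct Hd as [Dnn [_ [Dsym Dtri]]].
  destruct (t_definer_small star Hstar eps Heps) as [t [Ht Hsmall]].
  destruct (not_finite_two_points _ (Hacc _ (sneighborhood_sball x t Ht)))
    as [y1 [y2 [[Hy1 Ay1] [[Hy2 Ay2] Hne]]]].
  unfold sball in Hy1, Hy2.
  assert (Hclose : d y1 y2 < eps).
  { eapply Rle_lt_trans; [apply (Dtri y1 y2 x)|].
    apply Hsmall; auto. rewrite Dsym. exact Hy1. }
  specialize (Hsep y1 y2 Ay1 Ay2 Hne). lra.
Qed.

End StarMetric.

Theorem theorem3p2 (X : Type) (star : R -> R -> R) (d : X -> X -> R)
  (HX : inhabited X) (Hstar : t_definer star) (Hd : star_metric star d)
  (Hacc : forall A : X -> Prop, ~ finite_set A ->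
            exists x, omega_acc_point d A x) :
  totally_bounded d.
Proof.
  intros eps Heps. apply NNPP. intros Hno_cover.
  assert (Hfar : forall F : list X, exists y, forall x, In x F -> eps <= d x y).
  { intros F. apply NNPP. intros Hnone. apply Hno_cover. exists F. intros y.
    apply NNPP. intros Huncovered. apply Hnone. exists y. intros x Hx.
    apply Rnot_lt_le. intros Hlt. apply Huncovered. exists x. split; auto. }
  destruct (exists_infinite_pairwise (fun a b => eps <= d a b)) as [A [Hinf Hsep]].
  - intros x. rewrite (star_metric_refl Hd). lra.
  - intros x y. destruct Hd as [_ [_ [Dsym _]]]. rewrite Dsym. auto.
  - exact Hfar.
  - destruct (Hacc A Hinf) as [x Hx].
    exact (separated_no_omega_acc_point Hstar Hd eps A x Heps Hsep Hx).
Qed.
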